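(* Let $\mathcal D$ be an (extremal epi, mono) category. Then there is a faithful functor $R\colon\mathcal P(\mathcal D)\to\mathcal Q(\mathcal D)$ which is the identity on underlying objects and morphisms of $\mathcal D$, given on objects by $R(d,F)=(d,\hat F)$ where $\hat F$ is the saturation of the class of extremal epimorphisms $e_\phi$ appearing in (extremal epi, mono)-factorisations $\phi=m_\phi e_\phi$ of the elements $\phi\in F$. Moreover $R\circ I=\mathrm{id}_{\mathcal Q(\mathcal D)}$, where $I\colon\mathcal Q(\mathcal D)\to\mathcal P(\mathcal D)$ is the inclusion, and $R$ is right adjoint to $I$.
   Context: For a category $\mathcal D$ and an object $d$, $M(d)$ denotes the class of all morphisms of $\mathcal D$ with source $d$, quasi-ordered by $\phi_1\ge\phi_2$ iff there is a morphism $h$ with $h\phi_1=\phi_2$. A projective filtration on $d$ is a non-empty, directed, saturated subclass $F\subseteq M(d)$ (saturated: $\phi_1\in F$ and $\phi_1\ge\phi_2$ imply $\phi_2\in F$). For a non-empty directed subclass $S\subseteq M(d)$, its saturation is $\{\psi\in M(d):\psi\le\phi\text{ for some }\phi\in S\}$. A subclass $S\subseteq F$ is initial if every $\phi\in F$ satisfies $\phi\le\psi$ for some $\psi\in S$. For $f\colon d'\to d$, the pull back $f^*(F)$ is $\{\phi f:\phi\in F\}$. The category $\mathcal P(\mathcal D)$ has objects pairs $(d,F)$ with $F$ a projective filtration on $d$; a morphism $(d_1,F_1)\to(d_2,F_2)$ is a morphism $f\colon d_1\to d_2$ of $\mathcal D$ with $f^*(F_2)\subseteq F_1$. A projective filtration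 is reduced if it has an initial subclass consisting of extremal epimorphisms; $\mathcal Q(\mathcal D)$ is the full subcategory of $\mathcal P(\mathcal D)$ on objects $(d,F)$ with $F$ reduced. An (extremal epi, mono) category is one in which every morphism factors as an extremal epimorphism followed by a monomorphism and such factorisations have the unique diagonal fill-in property. *)

From Stdlib Require Import ProofIrrelevance.

Set Implicit Arguments.

Record Category := {
  Ob :> Type;
  Hom : Ob -> Ob -> Type;
  idm : forall a, Hom a a;
  comp : forall a b c, Hom b c -> Hom a b -> Hom a c;
  comp_id_l : forall a b (f : Hom a b), comp (idm b) f = f;
  comp_id_r : forall a b (f : Hom a b), comp f (idm a) = f;
  comp_assoc : forall a b c d (f : Hom a b) (g : Hom b c) (h : Hom c d),
      comp h (comp g f) = comp (comp h g) f
}.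
Arguments Hom {c0} _ _.
Arguments idm {c0} _.
Arguments comp {c0 _ _ _} _ _.

Notation "g ⊚ f" := (comp g f) (at level 40, left associativity).

Record Functor (C D : Category) := {
  fobj :> C -> D;
  fmap : forall a b, Hom a b -> Hom (fobj a) (fobj b);
  fmap_id : forall a, fmap a a (idm a) = idm (fobj a);
  fmap_comp : forall a b c (f : Hom a b) (g : Hom b c),
      fmap a c (g ⊚ f) = fmap b c g ⊚ fmap a b f
}.
Arguments fobj {C D} _ _.
Arguments fmap {C D} _ {a b} _.

Definition Faithful (C D : Category) (F : Functor C D) : Prop :=
  forall a b (f g : Hom a b), fmap F f = fmap F g -> f = g.

Definition Adjunction (C D : Category) (L : Functor C D) (R : Functor D C) : Prop :=
  exists (phi : forall (c : C) (d : D), Hom (fobj L c) d -> Hom c (fobj R d))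
         (psi : forall (c : C) (d : D), Hom c (fobj R d) -> Hom (fobj L c) d),
    (forall c d f, psi c d (phi c d f) = f) /\
    (forall c d g, phi c d (psi c d g) = g) /\
    (forall (c c' : C) (d d' : D) (h : Hom c' c) (k : Hom d d')
            (f : Hom (fobj L c) d),
        phi c' d' (k ⊚ f ⊚ fmap L h) = fmap R k ⊚ phi c d f ⊚ h).

Section Morphisms.
Context {C : Category}.

Definition Mono {a b : C} (m : Hom a b) : Prop :=
  forall (x : C) (g h : Hom x a), m ⊚ g = m ⊚ h -> g = h.

Definition Epi {a b : C} (e : Hom a b) : Prop :=
  forall (x : C) (g h : Hom b x), g ⊚ e = h ⊚ e -> g = h.

Definition IsIso {a b : C} (f : Hom a b) : Prop :=
  exists g : Hom b a, g ⊚ f = idm a /\ f ⊚ g = idm b.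

Definition ExtremalEpi {a b : C} (e : Hom a b) : Prop :=
  Epi e /\
  forall (c : C) (g : Hom a c) (m : Hom c b), Mono m -> e = m ⊚ g -> IsIso m.

Definition EMCategory_ : Prop :=
  (forall (a b : C) (f : Hom a b),
      exists (c : C) (e : Hom a c) (m : Hom c b),
        ExtremalEpi e /\ Mono m /\ f = m ⊚ e) /\
  (forall (a b c d : C) (e : Hom a b) (m : Hom c d) (u : Hom a c) (v : Hom b d),
      ExtremalEpi e -> Mono m -> v ⊚ e = m ⊚ u ->
      exists! t : Hom b c, t ⊚ e = u /\ m ⊚ t = v).

Definition MClass (d : C) := forall c : C, Hom d c -> Prop.

Definition geqM {d c1 c2 : C} (phi1 : Hom d c1) (phi2 : Hom d c2) : Prop :=
  exists h : Hom c1 c2, h ⊚ phi1 = phi2.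

Definition NonEmpty {d : C} (F : MClass d) : Prop :=
  exists (c : C) (phi : Hom d c), F c phi.

Definition Directed {d : C} (F : MClass d) : Prop :=
  forall (c1 : C) (phi1 : Hom d c1) (c2 : C) (phi2 : Hom d c2),
    F c1 phi1 -> F c2 phi2 ->
    exists (c : C) (psi : Hom d c), F c psi /\ geqM psi phi1 /\ geqM psi phi2.

Definition Saturated {d : C} (F : MClass d) : Prop :=
  forall (c1 : C) (phi1 : Hom d c1) (c2 : C) (phi2 : Hom d c2),
    F c1 phi1 -> geqM phi1 phi2 -> F c2 phi2.

Definition ProjFilt {d : C} (F : MClass d) : Prop :=
  NonEmpty F /\ Directed F /\ Saturated F.

Definition saturation {d : C} (S : MClass d) : MClass d :=
  fun c psi => exists (c' : C) (phi : Hom d c'), S c' phi /\ geqM phi psi.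

Definition SubClass {d : C} (S F : MClass d) : Prop :=
  forall (c : C) (phi : Hom d c), S c phi -> F c phi.

Definition Initial {d : C} (S F : MClass d) : Prop :=
  SubClass S F /\
  forall (c : C) (phi : Hom d c), F c phi ->
    exists (c' : C) (psi : Hom d c'), S c' psi /\ geqM psi phi.

Definition Reduced {d : C} (F : MClass d) : Prop :=
  exists S : MClass d, Initial S F /\
    forall (c : C) (phi : Hom d c), S c phi -> ExtremalEpi phi.

Definition pullback {d' d : C} (f : Hom d' d) (F : MClass d) : MClass d' :=
  fun c psi => exists phi : Hom d c, F c phi /\ psi = phi ⊚ f.

End Morphisms.
Definition EMCategory (C : Category) : Prop := @EMCategory_ C.

Record PObj (C : Category) := {
  pd : C;
  pF : MClass pd;
  pF_ok : ProjFilt pF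
}.
Arguments pd {C} _.
Arguments pF {C} _ _ _.

Definition PHom (C : Category) (X Y : PObj C) :=
  { f : Hom (pd X) (pd Y) | SubClass (pullback f (pF Y)) (pF X) }.

Lemma PHom_eq (C : Category) (X Y : PObj C) (f g : PHom X Y) :
  proj1_sig f = proj1_sig g -> f = g.
Proof.
  destruct f as [f Hf], g as [g Hg]; simpl; intros ->.
  f_equal; apply proof_irrelevance.
Qed.

Definition Pid (C : Category) (X : PObj C) : PHom X X.
Proof.
  exists (idm (pd X)).
  intros c psi [phi [Hphi ->]]. rewrite comp_id_r. exact Hphi.
Defined.

Definition Pcomp (C : Category) (X Y Z : PObj C) (g : PHom Y Z) (f : PHom X Y) :
  PHom X Z.
Proof.
  exists (proj1_sig g ⊚ proj1_sig f).
  destruct g as [g Hg], f as [f Hf]; simpl.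
  intros c psi [phi [Hphi ->]].
  rewrite comp_assoc. apply Hf. exists (phi ⊚ g). split; [|reflexivity].
  apply Hg. exists phi. split; [exact Hphi | reflexivity].
Defined.

Definition PCat (C : Category) : Category.
Proof.
  refine (@Build_Category (PObj C) (@PHom C) (@Pid C) (@Pcomp C) _ _ _);
    intros; apply PHom_eq; simpl.
  - apply comp_id_l.
  - apply comp_id_r.
  - apply comp_assoc.
Defined.

Definition QObj (C : Category) := { X : PObj C | Reduced (pF X) }.

Definition QCat (C : Category) : Category.
Proof.
  refine (@Build_Category (QObj C)
            (fun X Y => PHom (proj1_sig X) (proj1_sig Y))
            (fun X => Pid (proj1_sig X))
            (fun X Y Z g f => Pcomp g f) _ _ _);
    intros; apply PHom_eq; simpl.
  - apply comp_id_l.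
  - apply comp_id_r.
  - apply comp_assoc.
Defined.

Definition Incl (C : Category) : Functor (QCat C) (PCat C).
Proof.
  refine (@Build_Functor (QCat C) (PCat C) (fun X => proj1_sig X)
            (fun X Y f => f) _ _); reflexivity.
Defined.

Definition hatF (C : Category) (X : PObj C) : MClass (pd X) :=
  saturation (fun (c : C) (e : Hom (pd X) c) =>
    ExtremalEpi e /\
    exists (c' : C) (phi : Hom (pd X) c') (m : Hom c c'),
      pF X c' phi /\ Mono m /\ phi = m ⊚ e).

(* The assignment R(d,F) = (d, F-hat), identity on underlying morphisms,
   packaged as a functor from the facts that it is well defined. *)
Definition Robj (C : Category)
  (H1 : forall X : PObj C, ProjFilt (hatF X) /\ Reduced (hatF X))
  (X : PObj C) : QObj C :=
  exist _ (Build_PObj (proj1 (H1 X))) (proj2 (H1 X)).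

Definition mkR (C : Category)
  (H1 : forall X : PObj C, ProjFilt (hatF X) /\ Reduced (hatF X))
  (H2 : forall (X Y : PObj C) (f : PHom X Y),
          SubClass (pullback (proj1_sig f) (hatF Y)) (hatF X)) :
  Functor (PCat C) (QCat C).
Proof.
  refine (@Build_Functor (PCat C) (QCat C) (Robj H1)
            (fun X Y f => exist _ (proj1_sig f) (H2 X Y f)) _ _);
    intros; apply PHom_eq; reflexivity.
Defined.

From Stdlib Require Import ProofIrrelevance FunctionalExtensionality PropExtensionality.

(* For a class F of morphisms out of d, call an extremal epi e an
   "epi part" of F if m e lies in F for some mono m; F-hat is the saturation
   of the epi parts.  Everything rests on one consequence of the diagonal
   fill-in: if e is an extremal epi and some m e dominates m1 e1 with m1 mono,
   then e already dominates e1 (extremal_epi_dominates).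
   Faithfulness is immediate since R is the identity on morphisms, and the
   adjunction I -| R is the identity on underlying morphisms: the two
   admissibility conditions are equivalent for reduced sources. *)

Section Saturation.
Context {C : Category}.

Lemma geqM_refl {d c : C} (phi : Hom d c) : geqM phi phi.
Proof. exists (idm c). apply comp_id_l. Qed.

Lemma geqM_trans {d c1 c2 c3 : C} (p1 : Hom d c1) (p2 : Hom d c2) (p3 : Hom d c3) :
  geqM p1 p2 -> geqM p2 p3 -> geqM p1 p3.
Proof.
  intros [h1 E1] [h2 E2]. exists (h2 ⊚ h1).
  rewrite <- comp_assoc, E1. exact E2.
Qed.

Lemma geqM_precomp {d' d c1 c2 : C} (f : Hom d' d) (p1 : Hom d c1) (p2 : Hom d c2) :
  geqM p1 p2 -> geqM (p1 ⊚ f) (p2 ⊚ f).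
Proof. intros [h E]. exists h. rewrite comp_assoc, E. reflexivity. Qed.

Lemma saturation_contains {d : C} (S : MClass d) : SubClass S (saturation S).
Proof. intros c phi Hphi. exists c, phi. split; [exact Hphi | apply geqM_refl]. Qed.

Lemma saturation_saturated {d : C} (S : MClass d) : Saturated (saturation S).
Proof.
  intros c1 p1 c2 p2 [c [s [Hs Hge]]] H12.
  exists c, s. split; [exact Hs | exact (geqM_trans _ _ _ Hge H12)].
Qed.

Lemma saturation_least {d : C} (S F : MClass d) :
  SubClass S F -> Saturated F -> SubClass (saturation S) F.
Proof. intros HSF Hsat c phi [c' [s [Hs Hge]]]. exact (Hsat _ _ _ _ (HSF _ _ Hs) Hge). Qed.

Lemma saturation_initial {d : C} (S : MClass d) : Initial S (saturation S).
Proof.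
  split; [apply saturation_contains |].
  intros c phi [c' [s [Hs Hge]]]. exists c', s. split; assumption.
Qed.

Lemma saturation_reduced {d : C} (S : MClass d) :
  (forall (c : C) (phi : Hom d c), S c phi -> ExtremalEpi phi) -> Reduced (saturation S).
Proof. intros HS. exists S. split; [apply saturation_initial | exact HS]. Qed.

Lemma pullback_monotone {d' d : C} (f : Hom d' d) {F G : MClass d} :
  SubClass F G -> SubClass (pullback f F) (pullback f G).
Proof. intros HFG c psi [phi [Hphi ->]]. exists phi. split; [exact (HFG _ _ Hphi) | reflexivity]. Qed.

End Saturation.

Section EpiHat.
Variable C : Category.
Hypothesis HC : EMCategory C.

Definition epiParts {d : C} (F : MClass d) : MClass d :=
  fun (c : C) (e : Hom d c) =>
    ExtremalEpi e /\
    exists (c' : C) (phi : Hom d c') (m : Hom c c'), F c' phi /\ Mono m /\ phi = m ⊚ e.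

Definition epiHat {d : C} (F : MClass d) : MClass d := saturation (epiParts F).

Lemma extremal_epi_dominates {a b b' c d : C}
    {e : Hom a b} {m : Hom b b'} {e1 : Hom a c} {m1 : Hom c d} :
  ExtremalEpi e -> Mono m1 -> geqM (m ⊚ e) (m1 ⊚ e1) -> geqM e e1.
Proof.
  intros He Hm1 [h E]. rewrite comp_assoc in E.
  destruct (proj2 HC _ _ _ _ e m1 e1 (h ⊚ m) He Hm1 E) as [t [[Ht _] _]].
  exists t. exact Ht.
Qed.

Lemma epi_part_exists {d c : C} {F : MClass d} {phi : Hom d c} :
  F c phi ->
  exists (c' : C) (e : Hom d c') (m : Hom c' c), epiParts F c' e /\ Mono m /\ phi = m ⊚ e.
Proof.
  intros Hphi. destruct (proj1 HC _ _ phi) as [c' [e [m [He [Hm E]]]]].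
  exists c', e, m. split; [| split; assumption].
  split; [exact He |]. exists c, phi, m. auto.
Qed.

Lemma subclass_epiHat {d : C} (F : MClass d) : SubClass F (epiHat F).
Proof.
  intros c phi Hphi. destruct (epi_part_exists Hphi) as [c' [e [m [He [_ E]]]]].
  exists c', e. split; [exact He |]. exists m. symmetry. exact E.
Qed.

(* An upper bound phi in F of two members yields, through its epi part e,
   an upper bound in F-hat of everything below their epi parts. *)
Lemma epiHat_directed {d : C} {F : MClass d} : Directed F -> Directed (epiHat F).
Proof.
  intros Hdir c1 p1 c2 p2 [a1 [e1 [He1 G1]]] [a2 [e2 [He2 G2]]].
  destruct He1 as [_ [b1 [q1 [m1 [Hq1 [Hm1 E1]]]]]].
  destruct He2 as [_ [b2 [q2 [m2 [Hq2 [Hm2 E2]]]]]].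
  destruct (Hdir _ _ _ _ Hq1 Hq2) as [c [phi [Hphi [Hge1 Hge2]]]].
  destruct (epi_part_exists Hphi) as [c' [e [m [He [_ E]]]]].
  assert (e_dominates : forall (a b c0 : C) (ei : Hom d a) (mi : Hom a b) (pi : Hom d c0),
             Mono mi -> geqM phi (mi ⊚ ei) -> geqM ei pi -> geqM e pi).
  { intros a b c0 ei mi pi Hmi Hge Hpi. rewrite E in Hge.
    exact (geqM_trans _ _ _ (extremal_epi_dominates (proj1 He) Hmi Hge) Hpi). }
  exists c', e. split; [exact (saturation_contains _ _ _ He) | split].
  - rewrite E1 in Hge1. exact (e_dominates _ _ _ _ _ _ Hm1 Hge1 G1).
  - rewrite E2 in Hge2. exact (e_dominates _ _ _ _ _ _ Hm2 Hge2 G2).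
Qed.

Lemma epiHat_filtration {d : C} {F : MClass d} : ProjFilt F -> ProjFilt (epiHat F).
Proof.
  intros [[c [phi Hphi]] [Hdir _]]. split; [| split].
  - exists c, phi. exact (subclass_epiHat F c phi Hphi).
  - exact (epiHat_directed Hdir).
  - apply saturation_saturated.
Qed.

Lemma epiHat_reduced {d : C} (F : MClass d) : Reduced (epiHat F).
Proof. apply saturation_reduced. intros c e [He _]. exact He. Qed.

(* A reduced projective filtration contains its own epi parts, hence F-hat. *)
Lemma epiHat_of_reduced {d : C} {F : MClass d} :
  Reduced F -> Saturated F -> SubClass (epiHat F) F.
Proof.
  intros [S [[HSF HSinit] HSepi]] Hsat. apply saturation_least; [| exact Hsat].
  intros c e [_ [c' [phi [m [Hphi [Hm E]]]]]].
  destruct (HSinit _ _ Hphi) as [c3 [s [Hs Hge]]].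
  assert (Hge' : geqM (idm c3 ⊚ s) (m ⊚ e)) by (rewrite comp_id_l, <- E; exact Hge).
  exact (Hsat _ _ _ _ (HSF _ _ Hs) (extremal_epi_dominates (HSepi _ _ Hs) Hm Hge')).
Qed.

Lemma epiHat_pullback {d' d : C} {f : Hom d' d} {F : MClass d} {G : MClass d'} :
  SubClass (pullback f F) G -> SubClass (pullback f (epiHat F)) (epiHat G).
Proof.
  intros HFG c psi [p [[a [e [[_ [b [phi [m [Hphi [Hm E]]]]]] Hge]]] ->]].
  assert (Hphif : G b (phi ⊚ f)) by (apply HFG; exists phi; auto).
  destruct (epi_part_exists Hphif) as [c' [e' [m' [He' [_ E']]]]].
  assert (Hdom : geqM e' (e ⊚ f)).
  { apply (extremal_epi_dominates (m := m') (m1 := m) (proj1 He') Hm).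
    rewrite <- E', E, comp_assoc. apply geqM_refl. }
  exists c', e'. split; [exact He' |].
  exact (geqM_trans _ _ _ Hdom (geqM_precomp f _ _ Hge)).
Qed.

Lemma hatF_reduced_filtration (X : PObj C) : ProjFilt (hatF X) /\ Reduced (hatF X).
Proof. split; [exact (epiHat_filtration (pF_ok X)) | apply epiHat_reduced]. Qed.

Lemma hatF_pullback (X Y : PObj C) (f : PHom X Y) :
  SubClass (pullback (proj1_sig f) (hatF Y)) (hatF X).
Proof. apply epiHat_pullback. exact (proj2_sig f). Qed.

Lemma hatF_of_reduced (X : PObj C) : Reduced (pF X) -> hatF X = pF X.
Proof.
  intros Hred.
  apply functional_extensionality_dep; intro c.
  apply functional_extensionality; intro phi.
  apply propositional_extensionality; split.
  - apply (epiHat_of_reduced Hred (proj2 (proj2 (pF_ok X)))).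
  - apply subclass_epiHat.
Qed.

Definition R : Functor (PCat C) (QCat C) := mkR hatF_reduced_filtration hatF_pullback.

Lemma R_faithful : Faithful R.
Proof. intros X Y f g E. apply PHom_eq. exact (f_equal (@proj1_sig _ _) E). Qed.

(* R I = id: a reduced filtration is its own F-hat. *)
Lemma R_after_inclusion (Y : QObj C) : fobj R (fobj (Incl C) Y) = Y.
Proof.
  destruct Y as [X Hred]. simpl. unfold Robj.
  generalize (proj1 (hatF_reduced_filtration X)) (proj2 (hatF_reduced_filtration X)).
  rewrite (hatF_of_reduced X Hred). destruct X as [d F ok]. simpl.
  intros ok' Hred'.
  rewrite (proof_irrelevance _ ok' ok), (proof_irrelevance _ Hred' Hred).
  reflexivity.
Qed.

Lemma admissible_into_R (Y X : PObj C) (f : Hom (pd Y) (pd X)) :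
  Reduced (pF Y) ->
  SubClass (pullback f (pF X)) (pF Y) -> SubClass (pullback f (hatF X)) (pF Y).
Proof.
  intros Hred Hf. rewrite <- (hatF_of_reduced Y Hred).
  exact (epiHat_pullback Hf).
Qed.

Lemma admissible_from_R (Y X : PObj C) (f : Hom (pd Y) (pd X)) :
  SubClass (pullback f (hatF X)) (pF Y) -> SubClass (pullback f (pF X)) (pF Y).
Proof.
  intros Hf c psi Hpsi. apply Hf.
  exact (pullback_monotone f (subclass_epiHat (pF X)) c psi Hpsi).
Qed.

Lemma inclusion_left_adjoint : Adjunction (Incl C) R.
Proof.
  exists (fun (Y : QObj C) (X : PObj C) (f : PHom (proj1_sig Y) X) =>
            exist _ (proj1_sig f)
              (admissible_into_R (proj1_sig Y) X _ (proj2_sig Y) (proj2_sig f))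
            : @Hom (QCat C) Y (fobj R X)).
  exists (fun (Y : QObj C) (X : PObj C) (f : @Hom (QCat C) Y (fobj R X)) =>
            exist _ (proj1_sig f) (admissible_from_R (proj1_sig Y) X _ (proj2_sig f))
            : @Hom (PCat C) (fobj (Incl C) Y) X).
  split; [| split]; intros; apply PHom_eq; reflexivity.
Qed.

End EpiHat.

Theorem mainTheorem3 (C : Category) (HC : EMCategory C) :
  exists (H1 : forall X : PObj C, ProjFilt (hatF X) /\ Reduced (hatF X))
         (H2 : forall (X Y : PObj C) (f : PHom X Y),
                 SubClass (pullback (proj1_sig f) (hatF Y)) (hatF X)),
    Faithful (mkR H1 H2) /\
    (forall Y : QObj C, fobj (mkR H1 H2) (fobj (Incl C) Y) = Y) /\
    Adjunction (Incl C) (mkR H1 H2).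
Proof.
  exists (hatF_reduced_filtration C HC), (hatF_pullback C HC).
  split; [| split].
  - exact (R_faithful C HC).
  - exact (R_after_inclusion C HC).
  - exact (inclusion_left_adjoint C HC).
Qed.
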